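(* Let $G=(V,E)$ be a hypergraph, let $(V_1,\dots,V_k)$ be a maximal minimum $k$-partition in $G$ for an integer $k\ge2$, and let $S\subseteq V_1$ and $T\subseteq V\setminus V_1$ be such that $T\cap V_j\ne\emptyset$ for every $j\in\{2,\dots,k\}$. If $(U,\overline U)$ is a minimum $(S,T)$-terminal cut, then $U\subseteq V_1$.
   Context: A hypergraph $G=(V,E)$ has finite vertex set $V$ and finite multiset $E$ of unit-cost hyperedges (subsets of $V$). For $X\subseteq V$, $\overline X=V\setminus X$ and $d(X)$ is the number of hyperedges meeting both $X$ and $\overline X$. For an (ordered) partition of $V$ into $k$ non-empty parts, its cost is the number of hyperedges meeting at least two parts; a minimum $k$-partition has minimum cost; a minimum $k$-partition $(V_1,\dots,V_k)$ is a maximal minimum $k$-partition if there is no minimum $k$-partition $(V_1',\dots,V_k')$ with $V_1\subsetneq V_1'$. For disjoint $S,T\subseteq V$, a 2-partition $(U,\overline U)$ is an $(S,T)$-terminal cut if $S\subseteq U\subseteq V\setminus T$, and it is minimum if $d(U)$ is minimum among such cuts. *)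

From mathcomp Require Import all_boot.
Set Implicit Arguments. Unset Strict Implicit. Unset Printing Implicit Defensive.

Definition hypergraph (V : finType) := seq {set V}.

Definition cut_val (V : finType) (E : hypergraph V) (X : {set V}) : nat :=
  count (fun e : {set V} => (e :&: X != set0) && (e :&: ~: X != set0)) E.

(* Ordered k-partition of V into non-empty parts (indexed by 'I_k;
   index 0 is the first part V_1). *)
Definition is_kpartition (V : finType) (k : nat) (P : 'I_k -> {set V}) : Prop :=
  (forall i, P i != set0) /\
  (forall i j, i != j -> [disjoint P i & P j]) /\
  (forall x : V, exists i, x \in P i).

Definition part_cost (V : finType) (E : hypergraph V) (k : nat)
  (P : 'I_k -> {set V}) : nat :=
  count (fun e : {set V} =>
    [exists i : 'I_k, exists j : 'I_k,
       [&& i != j, e :&: P i != set0 & e :&: P j != set0]]) E.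

Definition is_min_kpartition (V : finType) (E : hypergraph V) (k : nat)
  (P : 'I_k -> {set V}) : Prop :=
  is_kpartition P /\
  forall Q : 'I_k -> {set V}, is_kpartition Q -> part_cost E P <= part_cost E Q.

(* the first part V_1 (the part with index 0; empty if k = 0) *)
Definition first_part (V : finType) (k : nat) (P : 'I_k -> {set V}) : {set V} :=
  [set x | [exists i : 'I_k, (val i == 0) && (x \in P i)]].

Definition is_maximal_min_kpartition (V : finType) (E : hypergraph V) (k : nat)
  (P : 'I_k -> {set V}) : Prop :=
  is_min_kpartition E P /\
  ~ (exists Q : 'I_k -> {set V},
        is_min_kpartition E Q /\ first_part P \proper first_part Q).

Definition is_terminal_cut (V : finType) (S T U : {set V}) : Prop :=
  S \subset U /\ U \subset ~: T.

Definition is_min_terminal_cut (V : finType) (E : hypergraph V)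
  (S T U : {set V}) : Prop :=
  is_terminal_cut S T U /\
  forall U' : {set V}, is_terminal_cut S T U' -> cut_val E U <= cut_val E U'.

From mathcomp Require Import all_boot.
Set Implicit Arguments. Unset Strict Implicit. Unset Printing Implicit Defensive.

(* Suppose U is not inside V_1 = W. Moving U into the first part gives the
   k-partition (W ∪ U, V_2 \ U, ..., V_k \ U); its parts are non-empty because
   T avoids U and meets every V_j with j >= 2. Edge by edge,
     cost(new partition) + d(U ∩ W) <= cost(P) + d(U),
   and U ∩ W is itself an (S,T)-terminal cut, so d(U) <= d(U ∩ W). Hence the
   new partition is again minimum while its first part strictly contains W,
   contradicting the maximality of P. *)

Lemma leq_add_count (T : Type) (a b c d : pred T) (s : seq T) :
  (forall x, a x + b x <= c x + d x) ->
  count a s + count b s <= count c s + count d s.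
Proof.
move=> le_abcd; elim: s => //= x s IHs.
by rewrite addnACA [leqRHS]addnACA leq_add.
Qed.

Section Labellings.
Variables (V : finType) (k : nat).
Implicit Types (f : V -> 'I_k) (P : 'I_k -> {set V}) (e U X : {set V}).

Definition labelling P f := forall x i, (x \in P i) = (f x == i).

Definition label_classes f (i : 'I_k) : {set V} := [set x | f x == i].

Definition splits f e := [exists x in e, exists y in e, f x != f y].

(* [cut_val E X] is, by conversion, [count (crosses^~ X) E]. *)
Definition crosses e X := (e :&: X != set0) && (e :&: ~: X != set0).

Definition relabel f U (i : 'I_k) (x : V) : 'I_k := if x \in U then i else f x.

Lemma kpartition_labelling P : is_kpartition P -> exists f, labelling P f.
Proof.
case=> _ [disjP coverP].
have [f Pf] := fin_all_exists coverP.
exists f => x i; apply/idP/eqP => [xPi | <-//].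
apply/eqP; apply: contraT => neq_fi.
by rewrite (disjointFr (disjP _ _ neq_fi) (Pf x)) in xPi.
Qed.

Lemma label_classes_labelling f : labelling (label_classes f) f.
Proof. by move=> x i; rewrite inE. Qed.

Lemma label_classes_kpartition f :
  (forall i, exists x, f x = i) -> is_kpartition (label_classes f).
Proof.
move=> f_onto; split; [|split].
- by move=> i; have [x fx] := f_onto i; apply/set0Pn; exists x; rewrite inE fx.
- move=> i j neq_ij; rewrite -setI_eq0; apply/eqP/setP => x; rewrite !inE.
  by apply/negbTE/andP => -[/eqP fi /eqP fj]; rewrite -fi -fj eqxx in neq_ij.
- by move=> x; exists (f x); rewrite inE.
Qed.

Lemma part_cost_labelling (E : hypergraph V) P f :
  labelling P f -> part_cost E P = count (splits f) E.
Proof.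
move=> Pf; apply: eq_count => e; apply/existsP/existsP.
- case=> i /existsP [j /and3P [neq_ij /set0Pn [x /setIP [xe xPi]]
    /set0Pn [y /setIP [ye yPj]]]].
  move: xPi yPj; rewrite !Pf => /eqP fx /eqP fy.
  by exists x; rewrite xe; apply/existsP; exists y; rewrite ye fx fy.
- case=> x /andP [xe /existsP [y /andP [ye neq_fxy]]].
  exists (f x); apply/existsP; exists (f y); rewrite neq_fxy /=.
  by apply/andP; split; apply/set0Pn; [exists x | exists y];
    rewrite inE ?xe ?ye Pf eqxx.
Qed.

Lemma first_part_labelling P f (i0 : 'I_k) :
  labelling P f -> val i0 = 0 -> first_part P = [set x | f x == i0].
Proof.
move=> Pf i0_0; apply/setP => x; rewrite !inE; apply/existsP/idP.
- by case=> i /andP [/eqP i_0 xPi]; rewrite -(val_inj (etrans i_0 (esym i0_0))) -Pf.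
- by move=> fx; exists i0; rewrite i0_0 eqxx Pf.
Qed.

Lemma splits_pair f e x y : x \in e -> y \in e -> f x != f y -> splits f e.
Proof.
by move=> xe ye neq_fxy; apply/existsP; exists x; rewrite xe; apply/existsP; exists y; rewrite ye.
Qed.

Lemma crosses_pair e X x y : x \in e -> x \in X -> y \in e -> y \notin X -> crosses e X.
Proof.
move=> xe xX ye yX; apply/andP; split; apply/set0Pn;
  [exists x | exists y]; by rewrite !inE ?xe ?xX ?ye ?yX.
Qed.

Section Relabel.
Variables (f : V -> 'I_k) (U : {set V}) (i : 'I_k) (e : {set V}).
Let q := relabel f U i.
Let W := [set x | f x == i].

Lemma splits_relabel_outside :
  splits q e -> exists2 x, x \in e & (x \notin U) && (f x != i).
Proof.
case/existsP => x /andP [xe /existsP [y /andP [ye]]]; rewrite /q /relabel.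
case: (boolP (x \in U)) => xU; case: (boolP (y \in U)) => yU.
- by rewrite eqxx.
- by rewrite eq_sym => neq_fy; exists y; rewrite ?yU.
- by move=> neq_fx; exists x; rewrite ?xU.
- move=> neq_fxy; case: (eqVneq (f x) i) => [fx | neq_fx]; last by exists x; rewrite ?xU.
  by exists y; rewrite // yU -fx eq_sym.
Qed.

Lemma splits_relabel : splits q e -> splits f e || crosses e U.
Proof.
case/existsP => x /andP [xe /existsP [y /andP [ye]]]; rewrite /q /relabel.
case: (eqVneq (f x) (f y)) => [eq_fxy | neq_fxy _]; last by rewrite (splits_pair xe ye).
case: (boolP (x \in U)) => xU; case: (boolP (y \in U)) => yU.
- by rewrite eqxx.
- by rewrite (crosses_pair xe xU ye yU) orbT.
- by rewrite (crosses_pair ye yU xe xU) orbT.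
- by rewrite eq_fxy eqxx.
Qed.

Lemma crosses_meet : crosses e (U :&: W) -> splits f e || crosses e U.
Proof.
case/andP => /set0Pn [z /setIP [ze /setIP [zU]]]; rewrite inE => /eqP fz.
case/set0Pn => y /setIP [ye]; rewrite !inE negb_and => /orP [yU | neq_fy].
  by rewrite (crosses_pair ze zU ye yU) orbT.
by rewrite (splits_pair ye ze) // fz.
Qed.

Lemma splits_relabel_crosses_meet :
  splits q e -> crosses e (U :&: W) -> splits f e && crosses e U.
Proof.
move=> /splits_relabel_outside [x xe /andP [xU neq_fx]].
case/andP => /set0Pn [z /setIP [ze /setIP [zU]]]; rewrite inE => /eqP fz _.
by rewrite (splits_pair xe ze) ?fz // (crosses_pair ze zU xe xU).
Qed.

Lemma relabel_edge_ineq :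
  splits q e + crosses e (U :&: W) <= splits f e + crosses e U.
Proof.
move: splits_relabel crosses_meet splits_relabel_crosses_meet.
case: (splits q e); case: (crosses e (U :&: W));
  case: (splits f e); case: (crosses e U) => // h1 h2 h3;
  by [apply: h1 | apply: h2 | apply: h3].
Qed.

End Relabel.

Lemma relabel_class f U i : [set x | relabel f U i x == i] = U :|: [set x | f x == i].
Proof. by apply/setP => x; rewrite !inE /relabel; case: (x \in U); rewrite ?eqxx. Qed.

Lemma relabel_onto f U i :
  (exists x, f x = i) -> (forall j, j != i -> exists2 x, f x = j & x \notin U) ->
  forall j, exists x, relabel f U i x = j.
Proof.
move=> [x fx] outside_U j; rewrite /relabel; case: (eqVneq j i) => [-> | neq_ji].
  by exists x; case: (x \in U).
by have [y fy yU] := outside_U j neq_ji; exists y; rewrite (negbTE yU).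
Qed.

Lemma relabel_cost_ineq (E : hypergraph V) f U i :
  count (splits (relabel f U i)) E + cut_val E (U :&: [set x | f x == i])
  <= count (splits f) E + cut_val E U.
Proof. exact: leq_add_count (relabel_edge_ineq f U i). Qed.

End Labellings.

Lemma min_kpartition_le (V : finType) (E : hypergraph V) k (P Q : 'I_k -> {set V}) :
  is_min_kpartition E P -> is_kpartition Q -> part_cost E Q <= part_cost E P ->
  is_min_kpartition E Q.
Proof. by move=> [_ Pmin] Qk QP; split=> // R Rk; apply: leq_trans QP (Pmin R Rk). Qed.

Theorem lemma4p1 (V : finType) (E : hypergraph V) (k : nat)
  (P : 'I_k -> {set V}) (S T U : {set V}) :
  2 <= k ->
  is_maximal_min_kpartition E P ->
  S \subset first_part P ->
  T \subset ~: first_part P ->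
  (forall j : 'I_k, 1 <= val j -> T :&: P j != set0) ->
  is_min_terminal_cut E S T U ->
  U \subset first_part P.
Proof.
move=> k2 [Pmin Pmax] SW TW TP [[SU UT] Umin].
have [f Pf] := kpartition_labelling Pmin.1.
pose i0 : 'I_k := Ordinal (ltnW k2).
have W_def := first_part_labelling Pf (erefl : val i0 = 0).
rewrite W_def in SW TW *; set W := [set x | f x == i0] in SW TW *.
apply/idPn => nUW; pose q := relabel f U i0.
have q_onto : forall j, exists x, q x = j.
  apply: relabel_onto => [|j neq_j].
    by have /set0Pn [x] := Pmin.1.1 i0; rewrite Pf => /eqP; exists x.
  have /set0Pn [x /setIP [xT]] : T :&: P j != set0.
    by apply: TP; rewrite lt0n; apply: contra neq_j => /eqP j_0; apply/eqP/val_inj.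
  rewrite Pf => /eqP fx; exists x => //.
  by apply/negP => /(subsetP UT); rewrite inE xT.
have cost_le : part_cost E (label_classes q) <= part_cost E P.
  have UWcut : is_terminal_cut S T (U :&: W).
    by split; [rewrite subsetI SU | apply: subset_trans UT; apply: subsetIl].
  rewrite (part_cost_labelling _ (label_classes_labelling _)) (part_cost_labelling _ Pf).
  rewrite -(leq_add2r (cut_val E (U :&: W))).
  by apply: leq_trans (relabel_cost_ineq E f U i0) _; rewrite leq_add2l Umin.
apply: Pmax; exists (label_classes q); split.
  exact: min_kpartition_le Pmin (label_classes_kpartition q_onto) cost_le.
rewrite W_def (first_part_labelling (label_classes_labelling q) (erefl : val i0 = 0)).
by rewrite relabel_class properUr.
Qed.
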